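(* Let $q\ge 1$, let $u:(0,\infty)\to[0,\infty)$, and put $\psi(s)=s\,u(s)$. Assume $\psi$ is non-decreasing on $(0,\infty)$ and bounded, with $\kappa:=\sup_{s>0}\psi(s)=\lim_{s\to\infty}\psi(s)$. Let $x_1,\dots,x_n\in\mathbb{R}^q$ be arbitrary data points, with the convention stated in the context for terms with $x_i=0$. (a) Let $\eta>0$ and suppose $\kappa<1$. Then every symmetric positive definite $q\times q$ matrix $\Sigma$ satisfying $$\Sigma=\frac1n\sum_{i=1}^n u(x_i^{\mathrm T}\Sigma^{-1}x_i)\,x_ix_i^{\mathrm T}+\eta I_q$$ satisfies $$\eta I_q\le \Sigma\le \frac{\eta}{1-\kappa}I_q .$$ (b) Let $0<\gamma\le 1$ and suppose $\kappa<1/(1-\gamma)$, i.e. $(1-\gamma)\kappa<1$. Then every symmetric positive definite $q\times q$ matrix $\Sigma$ satisfying $$\Sigma=(1-\gamma)\frac1n\sum_{i=1}^n u(x_i^{\mathrm T}\Sigma^{-1}x_i)\,x_ix_i^{\mathrm T}+\gamma I_q$$ satisfies $$\gamma I_q\le \Sigma\le \frac{\gamma}{1-(1-\gamma)\kappa}I_q .$$ Consequently, for any estimator defined, for every finite data set, as a positive definite solution of the equation in (a) (with $\eta>0$, $\kappa<1$), resp. of the equation in (b) (with $0<\gamma\le1$, $(1-\gamma)\kappa<1$), the finite-sample contamination breakdown point equals $1$ at every data set; i.e., the estimator cannot break down.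
   Context: Inequalities between symmetric matrices refer to the Loewner order: $A\le B$ means $B-A$ is positive semidefinite; $I_q$ is the $q\times q$ identity. Convention: if some data point $z=0$, the corresponding summand $u(z^{\mathrm T}Az)zz^{\mathrm T}$ is interpreted as the zero matrix. Finite-sample contamination breakdown point: for a data set $X=\{x_1,\dots,x_n\}$ and $m\ge1$, add arbitrary points $Y=\{y_1,\dots,y_m\}$ to form $Z=X\cup Y$. For a scatter statistic $V(\cdot)$ (taking values in positive definite matrices), breakdown at contamination level $m/(n+m)$ occurs if, over all choices of $Y$ with $|Y|=m$, either $V(Z)$ fails to exist for some $Y$, or the largest eigenvalue of $V(Z)$ is unbounded, or the smallest eigenvalue of $V(Z)$ is not bounded away from $0$ (equivalently $\sup_Y\|\log(V(X)^{-1/2}V(Z)V(X)^{-1/2})\|_F=\infty$). The breakdown point is the smallest $m/(n+m)$ at which breakdown occurs; it is said to equal $1$ when breakdown never occurs, for any $m$. *)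

From HB Require Import structures.
From mathcomp Require Import all_boot all_order all_algebra.
Set Implicit Arguments. Unset Strict Implicit. Unset Printing Implicit Defensive.
Import Order.TTheory GRing.Theory Num.Theory.
Local Open Scope ring_scope.

Section Defs.
Variable R : rcfType.
Variable q : nat.

Definition qform (A : 'M[R]_q) (v : 'cV[R]_q) : R := (v^T *m A *m v) 0 0.

Definition psdmx (A : 'M[R]_q) : Prop :=
  A^T = A /\ forall v : 'cV[R]_q, 0 <= qform A v.

Definition pdmx (A : 'M[R]_q) : Prop :=
  A^T = A /\ forall v : 'cV[R]_q, v != 0 -> 0 < qform A v.

Definition loewner_le (A B : 'M[R]_q) : Prop := psdmx (B - A).

Definition Msum (u : R -> R) (S : 'M[R]_q) (s : seq 'cV[R]_q) : 'M[R]_q :=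
  \sum_(x <- s) (if x == 0 then 0
                 else u ((x^T *m invmx S *m x) 0 0) *: (x *m x^T)).

Definition eq_a (eta : R) (u : R -> R) (S : 'M[R]_q) (s : seq 'cV[R]_q) : Prop :=
  S = (size s)%:R^-1 *: Msum u S s + eta%:M.

Definition eq_b (gamma : R) (u : R -> R) (S : 'M[R]_q) (s : seq 'cV[R]_q) : Prop :=
  S = ((1 - gamma) * (size s)%:R^-1) *: Msum u S s + gamma%:M.

(* Contamination of data set X by m points Y does NOT cause breakdown of the
   scatter statistic V: V(X ∪ Y) exists (V is total) and its eigenvalues stay
   within [c, C] with c > 0 uniformly over all Y with |Y| = m. *)
Definition no_breakdown_at (V : seq 'cV[R]_q -> 'M[R]_q) (X : seq 'cV[R]_q) (m : nat) : Prop :=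
  exists c C : R, 0 < c /\
    forall Y : seq 'cV[R]_q, size Y = m ->
      loewner_le c%:M (V (X ++ Y)) /\ loewner_le (V (X ++ Y)) C%:M.

Definition breakdown_point_one (V : seq 'cV[R]_q -> 'M[R]_q) (X : seq 'cV[R]_q) : Prop :=
  forall m : nat, (0 < m)%N -> no_breakdown_at V X m.

End Defs.

(* For a positive definite solution S and any vector v, Cauchy-Schwarz in the
   inner product given by S yields (v'x)^2 <= (x'S^-1 x)(v'Sv), so each summand
   u(x'S^-1 x)(v'x)^2 is at most psi(x'S^-1 x) v'Sv <= kappa v'Sv.  Plugging
   this into the fixed-point equation gives
   v'Sv <= c kappa v'Sv + eta v'v with c = 1 (resp. 1 - gamma), while the sum is
   nonnegative, which gives eta v'v <= v'Sv.  The bounds hold for every data set,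
   so contamination can never break the estimator down. *)
From HB Require Import structures.
From mathcomp Require Import all_boot all_order all_algebra.
From mathcomp Require Import ring lra.
Import Order.TTheory GRing.Theory Num.Theory.
Local Open Scope ring_scope.

Section QuadraticForms.
Context {R : rcfType} {q : nat}.
Implicit Types (A B S : 'M[R]_q) (v w x : 'cV[R]_q).

Definition bform A v w : R := (v^T *m A *m w) 0 0.

Lemma mx11_tr (M : 'M[R]_1) : M 0 0 = M^T 0 0.
Proof. by rewrite mxE. Qed.

Lemma mulmx11 (M N : 'M[R]_1) : (M *m N) 0 0 = M 0 0 * N 0 0.
Proof. by rewrite mxE big_ord1. Qed.

Lemma bform_sym A v w : A^T = A -> bform A w v = bform A v w.
Proof.
move=> symA; rewrite /bform -[in LHS]symA mx11_tr.
by rewrite !trmx_mul !trmxK mulmxA.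
Qed.

Lemma qform_lin2 A v w a b : A^T = A ->
  qform A (a *: v + b *: w) =
  a ^+ 2 * qform A v + 2 * a * b * bform A v w + b ^+ 2 * qform A w.
Proof.
move=> symA; have := bform_sym A v w symA.
rewrite /qform /bform !linearD /= !linearZ /= ?mulmxDl ?mulmxDr ?mulmxDl.
rewrite -?scalemxAl -?scalemxAr -?scalemxAl !mxE => ->; ring.
Qed.

Lemma qformD A B v : qform (A + B) v = qform A v + qform B v.
Proof. by rewrite /qform mulmxDr mulmxDl mxE. Qed.

Lemma qformZ a A v : qform (a *: A) v = a * qform A v.
Proof. by rewrite /qform -scalemxAr -scalemxAl mxE. Qed.

Lemma qform0 v : qform 0 v = 0.
Proof. by rewrite /qform mulmx0 mul0mx mxE. Qed.

Lemma qformB A B v : qform (A - B) v = qform A v - qform B v.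
Proof. by rewrite -scaleN1r qformD qformZ mulN1r. Qed.

Lemma qform_scalar a v : qform a%:M v = a * qform 1%:M v.
Proof. by rewrite -qformZ scalemx1. Qed.

Lemma qform_dyad x v : qform (x *m x^T) v = ((v^T *m x) 0 0) ^+ 2.
Proof.
rewrite /qform mulmxA -mulmxA mulmx11 expr2; congr (_ * _).
by rewrite mx11_tr trmx_mul trmxK.
Qed.

Lemma loewner_le_qform A B : A^T = A -> B^T = B ->
  (forall v, qform A v <= qform B v) -> loewner_le A B.
Proof.
move=> symA symB leAB; split; first by rewrite linearB /= symA symB.
by move=> v; rewrite qformB subr_ge0.
Qed.

Lemma pdmx_qform_ge0 S v : pdmx S -> 0 <= qform S v.
Proof.
case=> _ posS; have [->|v_neq0] := eqVneq v 0; last exact/ltW/posS.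
by rewrite /qform mulmx0 mxE.
Qed.

Lemma pdmx_unit S : pdmx S -> S \in unitmx.
Proof.
case=> _ posS; rewrite unitmxE unitfE; apply/negP => /det0P [w w_neq0 wS0].
have wT_neq0 : w^T != 0 by rewrite -trmx0 (inj_eq trmx_inj).
by have := posS _ wT_neq0; rewrite /qform trmxK wS0 mul0mx mxE ltxx.
Qed.

Lemma pdmx_cauchy_schwarz S v w : pdmx S ->
  bform S v w ^+ 2 <= qform S v * qform S w.
Proof.
move=> pdS; have [symS posS] := pdS.
have [->|w_neq0] := eqVneq w 0.
  by rewrite /bform mulmx0 mxE expr0n mulr_ge0 ?pdmx_qform_ge0.
have t_gt0 : 0 < qform S w := posS _ w_neq0.
have expand : qform S (qform S w *: v + (- bform S v w) *: w) =
              qform S w * (qform S w * qform S v - bform S v w ^+ 2).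
  by rewrite qform_lin2 //; ring.
have := pdmx_qform_ge0 S (qform S w *: v + (- bform S v w) *: w) pdS.
by rewrite expand pmulr_rge0 // subr_ge0 mulrC.
Qed.

Lemma qform_inv S x : pdmx S ->
  (x^T *m invmx S *m x) 0 0 = qform S (invmx S *m x).
Proof.
move=> pdS; rewrite /qform trmx_mul trmx_inv pdS.1 -!mulmxA.
by rewrite mulKVmx ?pdmx_unit.
Qed.

Lemma sqr_dot_le_qform_inv S x v : pdmx S ->
  ((v^T *m x) 0 0) ^+ 2 <= (x^T *m invmx S *m x) 0 0 * qform S v.
Proof.
move=> pdS; rewrite qform_inv // mulrC.
have -> : (v^T *m x) 0 0 = bform S v (invmx S *m x).
  by rewrite /bform -mulmxA mulKVmx ?pdmx_unit.
exact: pdmx_cauchy_schwarz.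
Qed.

Lemma qform_inv_gt0 S x : pdmx S -> x != 0 -> 0 < (x^T *m invmx S *m x) 0 0.
Proof.
move=> pdS x_neq0; rewrite qform_inv //; apply: pdS.2.
apply: contraNneq x_neq0 => w0.
by rewrite -(mulKVmx (pdmx_unit S pdS) x) w0 mulmx0.
Qed.

End QuadraticForms.

Section ScatterBounds.
Context {R : rcfType} {q : nat}.
Context {u : R -> R} {kappa : R}.
Hypothesis u_ge0 : forall s, 0 < s -> 0 <= u s.
Hypothesis psi_le : forall s, 0 < s -> s * u s <= kappa.
Implicit Types (S : 'M[R]_q) (v x : 'cV[R]_q) (s : seq 'cV[R]_q).

Lemma kappa_ge0 : 0 <= kappa.
Proof. by rewrite (le_trans (u_ge0 1 ltr01)) // -[u 1]mul1r psi_le. Qed.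

Definition Msum_term S v x : R :=
  if x == 0 then 0 else u ((x^T *m invmx S *m x) 0 0) * ((v^T *m x) 0 0) ^+ 2.

Lemma qform_Msum S s v : qform (Msum u S s) v = \sum_(x <- s) Msum_term S v x.
Proof.
rewrite /Msum /Msum_term; elim: s => [|x s IH]; first by rewrite !big_nil qform0.
rewrite !big_cons qformD IH; case: eqP => _; first by rewrite qform0.
by rewrite qformZ qform_dyad.
Qed.

Lemma Msum_term_bounds S v x : pdmx S ->
  0 <= Msum_term S v x <= kappa * qform S v.
Proof.
move=> pdS; rewrite /Msum_term; case: eqP => [_|/eqP x_neq0].
  by rewrite lexx mulr_ge0 ?kappa_ge0 ?pdmx_qform_ge0.
set t := (x^T *m invmx S *m x) 0 0.
have t_gt0 : 0 < t by exact: qform_inv_gt0.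
have ut_ge0 := u_ge0 t t_gt0.
rewrite mulr_ge0 ?sqr_ge0 //=.
apply: le_trans (ler_wpM2l ut_ge0 (sqr_dot_le_qform_inv S x v pdS)) _.
by rewrite mulrA [u t * t]mulrC ler_wpM2r ?pdmx_qform_ge0 ?psi_le.
Qed.

Lemma qform_Msum_ge0 S s v : pdmx S -> 0 <= qform (Msum u S s) v.
Proof.
move=> pdS; rewrite qform_Msum sumr_ge0 // => x _.
by case/andP: (Msum_term_bounds S v x pdS).
Qed.

Lemma qform_mean_Msum_le S s v : pdmx S ->
  (size s)%:R^-1 * qform (Msum u S s) v <= kappa * qform S v.
Proof.
move=> pdS; have [->|s_neq] := eqVneq s [::].
  by rewrite invr0 mul0r mulr_ge0 ?kappa_ge0 ?pdmx_qform_ge0.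
have n_gt0 : 0 < (size s)%:R :> R by rewrite ltr0n lt0n size_eq0.
rewrite ler_pdivrMl // qform_Msum -sum1_size natr_sum mulr_suml.
by apply: ler_sum => x _; rewrite mul1r; case/andP: (Msum_term_bounds S v x pdS).
Qed.

Lemma scatter_fixed_point_bounds (c eta : R) S s :
  0 <= c -> 0 < eta -> c * kappa < 1 -> pdmx S ->
  S = (c * (size s)%:R^-1) *: Msum u S s + eta%:M ->
  loewner_le eta%:M S /\ loewner_le S (eta / (1 - c * kappa))%:M.
Proof.
move=> c_ge0 eta_gt0 ck_lt1 pdS defS; have [symS _] := pdS.
have qS v : qform S v = c * ((size s)%:R^-1 * qform (Msum u S s) v)
                        + eta * qform 1%:M v.
  by rewrite {1}defS qformD qformZ qform_scalar mulrA.
have D_gt0 : 0 < 1 - c * kappa by rewrite subr_gt0.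
have qS_le v : qform S v * (1 - c * kappa) <= eta * qform 1%:M v.
  have := ler_wpM2l c_ge0 (qform_mean_Msum_le S s v pdS).
  by have := qS v; lra.
have mean_ge0 v : 0 <= (size s)%:R^-1 * qform (Msum u S s) v.
  by rewrite mulr_ge0 ?qform_Msum_ge0 // invr_ge0 ler0n.
split; apply: loewner_le_qform; rewrite ?tr_scalar_mx // => v.
  by rewrite qform_scalar qS lerDr mulr_ge0.
by rewrite qform_scalar mulrAC ler_pdivlMr.
Qed.

End ScatterBounds.

Lemma breakdown_point_one_of_bounds {R : rcfType} {q : nat}
    {V : seq 'cV[R]_q -> 'M[R]_q} {c C : R} {X : seq 'cV[R]_q} :
  0 < c -> (forall xs, loewner_le c%:M (V xs) /\ loewner_le (V xs) C%:M) ->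
  breakdown_point_one V X.
Proof. by move=> c_gt0 boundsV m _; exists c, C; split=> // Y _. Qed.

Theorem theorem1 (R : rcfType) (q : nat) (u : R -> R) (kappa : R)
  (hq : (0 < q)%N)
  (hu_nonneg : forall s : R, 0 < s -> 0 <= u s)
  (hpsi_mono : forall s t : R, 0 < s -> s <= t -> s * u s <= t * u t)
  (hpsi_bdd : exists B : R, forall s : R, 0 < s -> s * u s <= B)
  (hkappa_ub : forall s : R, 0 < s -> s * u s <= kappa)
  (hkappa_sup : forall e : R, 0 < e -> exists s : R, 0 < s /\ kappa - e < s * u s)
  (hkappa_lim : forall e : R, 0 < e -> exists M : R,
      forall s : R, 0 < s -> M <= s -> `|s * u s - kappa| < e) :
  (* (a) *)
  (forall eta : R, 0 < eta -> kappa < 1 ->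
     forall (xs : seq 'cV[R]_q) (S : 'M[R]_q), pdmx S -> eq_a eta u S xs ->
       loewner_le eta%:M S /\ loewner_le S (eta / (1 - kappa))%:M)
  /\
  (* (b) *)
  (forall gamma : R, 0 < gamma -> gamma <= 1 -> (1 - gamma) * kappa < 1 ->
     forall (xs : seq 'cV[R]_q) (S : 'M[R]_q), pdmx S -> eq_b gamma u S xs ->
       loewner_le gamma%:M S /\ loewner_le S (gamma / (1 - (1 - gamma) * kappa))%:M)
  /\
  (* consequence for estimators defined via (a) *)
  (forall eta : R, 0 < eta -> kappa < 1 ->
     forall V : seq 'cV[R]_q -> 'M[R]_q,
       (forall xs, pdmx (V xs) /\ eq_a eta u (V xs) xs) ->
       forall X : seq 'cV[R]_q, breakdown_point_one V X)
  /\
  (* consequence for estimators defined via (b) *)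
  (forall gamma : R, 0 < gamma -> gamma <= 1 -> (1 - gamma) * kappa < 1 ->
     forall V : seq 'cV[R]_q -> 'M[R]_q,
       (forall xs, pdmx (V xs) /\ eq_b gamma u (V xs) xs) ->
       forall X : seq 'cV[R]_q, breakdown_point_one V X).
Proof.
have bounds_a eta : 0 < eta -> kappa < 1 -> forall xs (S : 'M[R]_q),
    pdmx S -> eq_a eta u S xs ->
    loewner_le eta%:M S /\ loewner_le S (eta / (1 - kappa))%:M.
  move=> eta_gt0 k_lt1 xs S pdS.
  have := scatter_fixed_point_bounds hu_nonneg hkappa_ub _ _ S xs ler01 eta_gt0.
  by rewrite !mul1r => /(_ k_lt1 pdS).
have bounds_b gamma : 0 < gamma -> gamma <= 1 -> (1 - gamma) * kappa < 1 ->
    forall xs (S : 'M[R]_q), pdmx S -> eq_b gamma u S xs ->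
    loewner_le gamma%:M S /\ loewner_le S (gamma / (1 - (1 - gamma) * kappa))%:M.
  move=> g_gt0 g_le1 gk_lt1 xs S pdS defS.
  by apply: (scatter_fixed_point_bounds hu_nonneg hkappa_ub _ _ S xs);
    rewrite ?subr_ge0.
split; [exact: bounds_a | split; [exact: bounds_b | split]].
  move=> eta eta_gt0 k_lt1 V solV X.
  apply: (breakdown_point_one_of_bounds eta_gt0) => xs.
  by case: (solV xs) => pdV defV; exact: bounds_a eta_gt0 k_lt1 _ _ pdV defV.
move=> gamma g_gt0 g_le1 gk_lt1 V solV X.
apply: (breakdown_point_one_of_bounds g_gt0) => xs.
by case: (solV xs) => pdV defV; exact: bounds_b g_gt0 g_le1 gk_lt1 _ _ pdV defV.
Qed.
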